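(* In the setting below, the following hold. (a) If $k=0$ forms the $LSL$ MaRA (resp. MiRA), then $k=-1$ forms the $RSR$ MiRA (resp. MaRA). (b) If $k=1$ forms the $LSL$ MaRA (resp. MiRA), then $k=-2$ forms the $RSR$ MiRA (resp. MaRA).
   Context: Setting: a vehicle moves at unit speed with minimum turning radius $r>0$, in a steady current $(w_x,w_y)$ with $v_w=\sqrt{w_x^2+w_y^2}\in(0,1)$. The start pose is $(0,0,0)$ and the goal heading is $\theta_f\in[0,2\pi)$. $LSL$ reachable areas, for $k\in\{0,1\}$: - Center: $P^k_{LSL}=\big(r\sin\theta_f+w_xr(2k\pi+\theta_f),\ r(1-\cos\theta_f)+w_yr(2k\pi+\theta_f)\big)$. - Reachable area: $R^k_{LSL}=\{P^k_{LSL}+\beta(\cos\alpha+w_x,\sin\alpha+w_y):\beta\ge0,\ \alpha\in I^k_{LSL}\}$, with $I^0_{LSL}=[0,\theta_f]$ and $I^1_{LSL}=(\theta_f,2\pi)$. - $R^k_{LSL}$ is the set of goal positions reachable by $2\pi$-arc $LSL$ paths (left arc $\alpha$, straight $\beta$, left arc $\gamma$, with $\alpha,\gamma\in[0,2\pi)$ and $\alpha+\gamma=2k\pi+\theta_f$). $RSR$ reachable areas, for $k\in\{-1,-2\}$: - Center: $P^k_{RSR}=\big(-r\sin\theta_f-w_xr(2k\pi+\theta_f),\ -r(1-\cos\theta_f)-w_yr(2k\pi+\theta_f)\big)$. - Reachable area: $R^k_{RSR}=\{P^k_{RSR}+\beta(\cos\alpha+w_x,-\sin\alpha+w_y):\beta\ge0,\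 \alpha\in I^k_{RSR}\}$, with $I^{-1}_{RSR}=[0,2\pi-\theta_f]$ and $I^{-2}_{RSR}=(2\pi-\theta_f,2\pi)$. - $R^k_{RSR}$ corresponds to $2\pi$-arc $RSR$ paths with $-\alpha-\gamma=2k\pi+\theta_f$. Each such area is swept by a ray about its center as $\alpha$ ranges over its interval. The swept angle of the area is the total angle through which the ray direction turns. MaRA and MiRA: the $LSL$ MaRA (Major Reachable Area) is whichever of $R^0_{LSL},R^1_{LSL}$ is larger, i.e. has the larger swept angle, and the $LSL$ MiRA (Minor Reachable Area) is the other one. The $RSR$ MaRA and MiRA are defined likewise among $R^{-1}_{RSR},R^{-2}_{RSR}$. We say ''$k$ forms the MaRA (MiRA)'' when $R^k$ is the MaRA (MiRA). *)

From HB Require Import structures.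
From mathcomp Require Import all_boot all_order all_algebra.
From mathcomp Require Import all_classical all_reals all_analysis.
Set Implicit Arguments. Unset Strict Implicit. Unset Printing Implicit Defensive.
Import Order.TTheory GRing.Theory Num.Theory.
Import numFieldNormedType.Exports.
Local Open Scope classical_set_scope.
Local Open Scope ring_scope.

Section Defs.
Variable R : realType.

Definition current_speed (wx wy : R) : R := Num.sqrt (wx ^+ 2 + wy ^+ 2).

Definition LSL_dir (wx wy : R) (a : R) : R * R := (cos a + wx, sin a + wy).
Definition RSR_dir (wx wy : R) (a : R) : R * R := (cos a + wx, - sin a + wy).

Definition LSL_center (r wx wy thf : R) (k : nat) : R * R :=
  (r * sin thf + wx * r * (2 * k%:R * pi + thf),
   r * (1 - cos thf) + wy * r * (2 * k%:R * pi + thf)).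
Definition RSR_center (r wx wy thf : R) (k : int) : R * R :=
  (- r * sin thf - wx * r * (2 * k%:~R * pi + thf),
   - r * (1 - cos thf) - wy * r * (2 * k%:~R * pi + thf)).

Definition LSL_I (thf : R) (k : nat) : set R :=
  if k == 0%N then [set` `[0, thf]] else [set` `]thf, 2 * pi[].
Definition LSL_ends (thf : R) (k : nat) : R * R :=
  if k == 0%N then (0, thf) else (thf, 2 * pi).
Definition RSR_I (thf : R) (k : int) : set R :=
  if k == (-1)%R then [set` `[0, 2 * pi - thf]] else [set` `]2 * pi - thf, 2 * pi[].
Definition RSR_ends (thf : R) (k : int) : R * R :=
  if k == (-1)%R then (0, 2 * pi - thf) else (2 * pi - thf, 2 * pi).

Definition LSL_area (r wx wy thf : R) (k : nat) : set (R * R) :=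
  [set p | exists beta a, 0 <= beta /\ LSL_I thf k a /\
     p = ((LSL_center r wx wy thf k).1 + beta * (LSL_dir wx wy a).1,
          (LSL_center r wx wy thf k).2 + beta * (LSL_dir wx wy a).2)].
Definition RSR_area (r wx wy thf : R) (k : int) : set (R * R) :=
  [set p | exists beta a, 0 <= beta /\ RSR_I thf k a /\
     p = ((RSR_center r wx wy thf k).1 + beta * (RSR_dir wx wy a).1,
          (RSR_center r wx wy thf k).2 + beta * (RSR_dir wx wy a).2)].

Definition angle_lift (d : R -> R * R) (a b : R) (phi : R -> R) : Prop :=
  {within `[a, b], continuous phi} /\
  forall t, a <= t <= b ->
    d t = (Num.sqrt ((d t).1 ^+ 2 + (d t).2 ^+ 2) * cos (phi t),
           Num.sqrt ((d t).1 ^+ 2 + (d t).2 ^+ 2) * sin (phi t)).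

(* swept angle: total angle through which the ray direction turns, i.e. the
   total variation of a continuous angle function of the direction
   (independent of the choice of lift). *)
Definition swept_angle (d : R -> R * R) (a b : R) : \bar R :=
  ereal_sup [set total_variation a b phi | phi in angle_lift d a b].

Definition LSL_swept (wx wy thf : R) (k : nat) : \bar R :=
  swept_angle (LSL_dir wx wy) (LSL_ends thf k).1 (LSL_ends thf k).2.
Definition RSR_swept (wx wy thf : R) (k : int) : \bar R :=
  swept_angle (RSR_dir wx wy) (RSR_ends thf k).1 (RSR_ends thf k).2.

Definition LSL_MaRA (wx wy thf : R) (k : nat) : Prop :=
  (k <= 1)%N /\ (LSL_swept wx wy thf (1 - k) < LSL_swept wx wy thf k)%E.
Definition LSL_MiRA (wx wy thf : R) (k : nat) : Prop :=
  (k <= 1)%N /\ (LSL_swept wx wy thf k < LSL_swept wx wy thf (1 - k))%E.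
Definition RSR_MaRA (wx wy thf : R) (k : int) : Prop :=
  (k \in [:: (-1)%R; (-2)%R]) /\
  (RSR_swept wx wy thf (-3 - k) < RSR_swept wx wy thf k)%E.
Definition RSR_MiRA (wx wy thf : R) (k : int) : Prop :=
  (k \in [:: (-1)%R; (-2)%R]) /\
  (RSR_swept wx wy thf k < RSR_swept wx wy thf (-3 - k))%E.

End Defs.

(** Reversing the parameter, [t |-> 2 pi - t], carries the RSR ray direction
    [(cos t + wx, - sin t + wy)] to the LSL one and maps the LSL parameter
    intervals [[0, thf]] and [[thf, 2 pi]] onto the RSR intervals
    [[2 pi - thf, 2 pi]] and [[0, 2 pi - thf]].  Reparametrizing by a
    reflection preserves continuity of an angle lift and its total variation,
    so [R^0_LSL] and [R^-2_RSR] sweep the same angle, and so do [R^1_LSL] and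
    [R^-1_RSR].  The LSL comparison is therefore the RSR comparison with the
    roles of [k = -1] and [k = -2] exchanged; no assumption on [r], the
    current or [thf] is needed. *)
From HB Require Import structures.
From mathcomp Require Import all_boot all_order all_algebra.
From mathcomp Require Import all_classical all_reals all_analysis.
From mathcomp Require Import ring lra.
Import Order.TTheory GRing.Theory Num.Theory.
Import numFieldNormedType.Exports.
Local Open Scope classical_set_scope.
Local Open Scope ring_scope.

Lemma within_continuous_precomp {T U V : topologicalType}
    (A : set U) (B : set T) (f : U -> V) (g : T -> U) :
  continuous g -> {homo g : x / B x >-> A x} ->
  {within A, continuous f} -> {within B, continuous (f \o g)}.
Proof.
move=> cg gBA /subspace_continuousP cf; apply/subspace_continuousP => x Bx.
apply: (@cvg_comp _ _ _ g f _ (within A (nbhs (g x)))); last exact: cf (gBA _ Bx).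
move=> U' /=; rewrite !nbhs_simpl /within /= => /(cg x).
by rewrite nbhs_simpl /=; apply: filterS => z Az Bz; exact: Az (gBA _ Bz).
Qed.

Section reparametrization.
Variable R : realType.
Implicit Types (a b c : R) (f : R -> R) (d e : R -> R * R).

Lemma variations_shift_subset a b c f :
  variations a b f `<=` variations (a + c) (b + c) (fun x => f (x - c)).
Proof.
move=> _ [s [sa /eqP sb] <-].
have nth_shift t n : nth (b + c) (map (+%R^~ c) t) n = nth b t n + c.
  by elim: t n => [|x t IHt] [|n] //=.
exists (map (+%R^~ c) s).
  split; last by rewrite (last_map (+%R^~ c)) sb.
  by apply: homo_path sa => x y; rewrite /= ltrD2r.
rewrite /variation size_map; apply: eq_bigr => i _ /=.
by rewrite -[_ :: map _ s]/(map (+%R^~ c) (a :: s)) !nth_shift !addrK.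
Qed.

Lemma variations_shift a b c f :
  variations (a + c) (b + c) (fun x => f (x - c)) = variations a b f.
Proof.
apply/seteqP; split; last exact: variations_shift_subset.
have /= := variations_shift_subset (a + c) (b + c) (- c) (fun x => f (x - c)).
suff -> : (fun x => f (x - - c - c)) = f by rewrite !addrK.
by apply/funext => x; rewrite opprK addrK.
Qed.

Lemma total_variation_reflect a b c f :
  total_variation (c - b) (c - a) (fun x => f (c - x)) = total_variation a b f.
Proof.
rewrite total_variation_opp /total_variation !opprB -(variations_shift a b (- c)).
congr (ereal_sup [set _%:E | _ in variations _ _ _]).
by apply/funext => x /=; rewrite !opprK addrC.
Qed.

Lemma angle_lift_reflect {d e : R -> R * R} {a b c : R} {phi : R -> R} :
  (forall t, e t = d (c - t)) -> angle_lift d a b phi ->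
  angle_lift e (c - b) (c - a) (fun t => phi (c - t)).
Proof.
move=> de [cphi phiE]; split.
  apply: (@within_continuous_precomp _ _ _ _ _ _ (fun t => c - t) _ _ cphi).
    by move=> x; apply: cvgB; [exact: cvg_cst | exact: cvg_id].
  by move=> x /=; rewrite !in_itv /= => /andP[? ?]; apply/andP; split; lra.
by move=> t /andP[? ?]; rewrite !de; apply: phiE; apply/andP; split; lra.
Qed.

Lemma swept_angle_reflect d e a b c :
  (forall t, e t = d (c - t)) ->
  swept_angle e (c - b) (c - a) = swept_angle d a b.
Proof.
move=> de; have ed t : d t = e (c - t) by rewrite de subKr.
rewrite /swept_angle; congr ereal_sup; apply/seteqP; split => _ [phi lift <-].
- exists (fun t => phi (c - t)).
    by have := angle_lift_reflect ed lift; rewrite !subKr.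
  by rewrite -[RHS](total_variation_reflect _ _ c) !subKr.
- exists (fun t => phi (c - t)); first exact: angle_lift_reflect.
  by rewrite total_variation_reflect.
Qed.

Lemma RSR_dir_reflect (wx wy t : R) :
  RSR_dir wx wy t = LSL_dir wx wy (2 * pi - t).
Proof.
rewrite /RSR_dir /LSL_dir cosB sinB.
have -> : 2 * pi = pi *+ 2 :> R by rewrite mulr2n mulrDl mul1r.
rewrite cos2pi sin2pi.
by congr pair; ring.
Qed.

Lemma LSL_swept0_RSR (wx wy thf : R) :
  LSL_swept wx wy thf 0 = RSR_swept wx wy thf (-2).
Proof.
rewrite /LSL_swept /RSR_swept /LSL_ends /RSR_ends /=.
rewrite -(@swept_angle_reflect _ (RSR_dir wx wy) _ _ (2 * pi)) ?subr0 //.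
exact: RSR_dir_reflect.
Qed.

Lemma LSL_swept1_RSR (wx wy thf : R) :
  LSL_swept wx wy thf 1 = RSR_swept wx wy thf (-1).
Proof.
rewrite /LSL_swept /RSR_swept /LSL_ends /RSR_ends /=.
rewrite -(@swept_angle_reflect _ (RSR_dir wx wy) _ _ (2 * pi)) ?subrr //.
exact: RSR_dir_reflect.
Qed.

End reparametrization.

Theorem lemma3 (R : realType) (r wx wy thf : R) :
  0 < r ->
  0 < current_speed wx wy < 1 ->
  0 <= thf < 2 * pi ->
  ((LSL_MaRA wx wy thf 0 -> RSR_MiRA wx wy thf (-1)) /\
   (LSL_MiRA wx wy thf 0 -> RSR_MaRA wx wy thf (-1))) /\
  ((LSL_MaRA wx wy thf 1 -> RSR_MiRA wx wy thf (-2)) /\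
   (LSL_MiRA wx wy thf 1 -> RSR_MaRA wx wy thf (-2))).
Proof.
move=> _ _ _; rewrite /LSL_MaRA /LSL_MiRA /RSR_MaRA /RSR_MiRA /=.
rewrite (_ : -3 - -1 = -2 :> int) // (_ : -3 - -2 = -1 :> int) //.
rewrite !LSL_swept0_RSR !LSL_swept1_RSR.
by split; split => -[_ lt_swept].
Qed.
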